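(* Let $0<1/n_0\ll\beta\ll1$, let $n\ge n_0$ and let $\varepsilon\in(0,1)$. Let $\mathcal H$ be an $n$-vertex linear hypergraph with no singleton edges, let $G$ be the graph on $V(\mathcal H)$ whose edges are the edges of $\mathcal H$ of size $2$, and let $M=\{e\}$ be a difficult matching (with respect to $\varepsilon$) where $e$ is a huge edge, i.e. $|e|\ge\beta n/4$. Then at least one of the following holds: (a) there is a matching $M'$ of $\mathcal H$ with $M\subseteq M'$, $M'\setminus M\subseteq E(G)$, such that $M'$ covers every vertex of degree exactly $n-1$ in $\mathcal H$ and all but at most five of the vertices of degree exactly $n-2$ in $\mathcal H$; or (b) $\chi'(\mathcal H)\le n$.
   Context: A hypergraph has a finite vertex set and a set of nonempty edges (size-one edges are called singleton edges); linear means any two distinct edges share at most one vertex. Degrees are numbers of edges containing a vertex. A matching is a set of pairwise disjoint edges; it covers the vertices in its edges. Let $U$ be the set of vertices of degree at least $(1-\varepsilon)n$ in $G$. A matching $M$ is difficult if $|V(\mathcal H)\setminus U|\ge2$ and $M$ covers at least $3|V(\mathcal H)\setminus U|/4$ of the vertices in $V(\mathcal H)\setminus U$. $\chi'$ is the chromatic index. *)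

From HB Require Import structures.
From mathcomp Require Import all_boot all_order all_algebra.
From mathcomp Require Import reals.
Set Implicit Arguments. Unset Strict Implicit. Unset Printing Implicit Defensive.
Import Order.TTheory GRing.Theory Num.Theory.

Definition hyp_edges_nonempty (T : finType) (E : {set {set T}}) : Prop :=
  forall f, f \in E -> f != set0.

Definition linear_hyp (T : finType) (E : {set {set T}}) : Prop :=
  forall f g, f \in E -> g \in E -> f != g -> #|f :&: g| <= 1.

Definition no_singleton_edges (T : finType) (E : {set {set T}}) : Prop :=
  forall f, f \in E -> #|f| != 1.

Definition hdeg (T : finType) (E : {set {set T}}) (v : T) : nat :=
  #|[set f in E | v \in f]|.

Definition gdeg (T : finType) (E : {set {set T}}) (v : T) : nat :=
  #|[set f in E | (v \in f) && (#|f| == 2)]|.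

Definition is_matching (T : finType) (E M : {set {set T}}) : Prop :=
  M \subset E /\
  forall f g, f \in M -> g \in M -> f != g -> [disjoint f & g].

Definition covered (T : finType) (M : {set {set T}}) : {set T} :=
  \bigcup_(f in M) f.

Definition Uset (R : realType) (T : finType) (E : {set {set T}}) (eps : R)
  (n : nat) : {set T} :=
  [set v | ((1 - eps) * n%:R <= (gdeg E v)%:R)%R].

Definition difficult (R : realType) (T : finType) (E M : {set {set T}})
  (eps : R) (n : nat) : Prop :=
  let W := ~: Uset E eps n in
  2 <= #|W| /\ 3 * #|W| <= 4 * #|covered M :&: W|.

(* proper edge colouring with k colours: edges sharing a vertex get distinct
   colours. chi'(H) <= k  iff  such a colouring exists. *)
Definition edge_colorable (T : finType) (E : {set {set T}}) (k : nat) : Prop :=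
  exists c : {set T} -> 'I_k,
    forall f g, f \in E -> g \in E -> f != g -> ~~ [disjoint f & g] ->
      c f != c g.

From HB Require Import structures.
From mathcomp Require Import all_boot all_order all_algebra.
From mathcomp Require Import reals.
From mathcomp Require Import zify.
Import Order.TTheory GRing.Theory Num.Theory.
Set Implicit Arguments. Unset Strict Implicit. Unset Printing Implicit Defensive.

(* The conclusion in fact
   holds for every edge e of every n-vertex linear hypergraph without
   singleton edges.

   The core is a degree bound (gnonnbrs_le): the edges through v cover the
   other vertices disjointly, so a vertex of degree n - 1 - d has at most 2d
   non-neighbours in the graph G of the 2-edges.  Hence a vertex of degree
   n - 1 ("full") is adjacent in G to all other vertices and lies only in
   2-edges, and a vertex of degree n - 2 has at most two non-neighbours.

   If every vertex outside e is full, every edge other than e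
   is a 2-edge leaving e, and colouring each such pair by the sum of the
   positions of its ends modulo n, in an order listing the outside of e
   first, leaves a colour free for e (pair_colouring): chi'(H) <= n.
   Otherwise a greedy induction inside the complement of e
   (good_pairing_exists) matches, by 2-edges, all full vertices and all but at
   most three vertices of degree n - 2; adding e gives the matching of (a). *)

Section Stars.

Variables (T : finType) (E : {set {set T}}).
Hypotheses (hne : hyp_edges_nonempty E) (hlin : linear_hyp E)
  (hns : no_singleton_edges E).

Definition star (v : T) : {set {set T}} := [set f in E | v \in f].

Definition gnbrs (v : T) : {set T} := [set~ v] :&: [set y | [set v; y] \in E].
Definition gnonnbrs (v : T) : {set T} := [set~ v] :\: [set y | [set v; y] \in E].

Lemma edge_card_gt1 f : f \in E -> 1 < #|f|.
Proof. by move=> fE; move: (hne fE) (hns fE); rewrite -card_gt0; lia. Qed.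

Lemma edges_through_two_le1 v y :
  y != v -> #|[set f in star v | y \in f]| <= 1.
Proof.
move=> yv; apply/card_le1_eqP => f g.
rewrite !inE => /andP[/andP[fE vf] yf] /andP[/andP[gE vg] yg].
apply/eqP; apply: contraT; rewrite eq_sym => fg.
have vy_sub : [set v; y] \subset f :&: g.
  by apply/subsetP => z; rewrite !inE => /orP[]/eqP->; rewrite ?vf ?vg ?yf ?yg.
by have := leq_trans (subset_leq_card vy_sub) (hlin fE gE fg); rewrite cards2 eq_sym yv.
Qed.

(* Hence the sets f :\ v, for f in the star of v, are disjoint subsets of
   [set~ v]; double counting the incidences gives the bound. *)
Lemma star_sum_le v : \sum_(f in star v) #|f :\ v| <= #|T|.-1.
Proof.
have incidences f : #|f :\ v| = \sum_(y in [set~ v]) (y \in f).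
  rewrite -big_mkcondr /= sum1dep_card; apply: eq_card => y.
  by rewrite !inE andbC.
rewrite (eq_bigr _ (fun f _ => incidences f)) exchange_big /= -(cardsC1 v) -sum1_card.
apply: leq_sum => y; rewrite !inE => yv.
by rewrite -big_mkcondr /= sum1dep_card; apply: edges_through_two_le1.
Qed.

(* Every edge through v contributes at least 1 to the sum above, and an edge
   of size other than 2 contributes at least 2. *)
Lemma hdeg_add_nonpairs_le v :
  hdeg E v + #|[set f in star v | #|f| != 2]| <= #|T|.-1.
Proof.
pose P := [set f : {set T} | #|f| != 2].
have -> : [set f in star v | #|f| != 2] = star v :&: P.
  by apply/setP => f; rewrite !inE.
apply: leq_trans (star_sum_le v).
rewrite /hdeg -/(star v) -(cardsID P (star v)) (big_setID P) /=.
have cardD1 (f : {set T}) : f \in star v -> #|f :\ v| = #|f|.-1.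
  by rewrite inE => /andP[_ vf]; rewrite (cardsD1 v f) vf.
have gt1 (f : {set T}) : f \in star v -> 1 < #|f|.
  by rewrite inE => /andP[fE _]; apply: edge_card_gt1.
have nonpairs_ge2 : 2 * #|star v :&: P| <= \sum_(f in star v :&: P) #|f :\ v|.
  rewrite mulnC -sum_nat_const; apply: leq_sum => f /setIP[fS]; rewrite inE => fn2.
  by rewrite cardD1 //; move: (gt1 f fS) fn2; lia.
have pairs_ge1 : #|star v :\: P| <= \sum_(f in star v :\: P) #|f :\ v|.
  rewrite -sum1_card; apply: leq_sum => f /setDP[fS _].
  by rewrite cardD1 //; move: (gt1 f fS); lia.
by rewrite addnAC addnn -mul2n; apply: leq_add.
Qed.

Lemma pairs_le_gnbrs v : #|[set f in star v | #|f| == 2]| <= #|gnbrs v|.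
Proof.
apply: leq_trans (leq_imset_card (fun y => [set v; y]) _).
apply: subset_leq_card; apply/subsetP => f.
rewrite !inE => /andP[/andP[fE vf] /cards2P [a [b [ab fab]]]].
rewrite fab in fE *; move: vf; rewrite fab !inE => /orP[]/eqP-> {v}; apply/imsetP.
- by exists b; rewrite // !inE eq_sym ab fE.
- by exists a; rewrite 1?setUC // !inE ab setUC fE.
Qed.

Lemma gnonnbrs_le v : #|gnonnbrs v| <= 2 * (#|T|.-1 - hdeg E v).
Proof.
have := hdeg_add_nonpairs_le v; have := pairs_le_gnbrs v.
have := cardsID [set y | [set v; y] \in E] [set~ v]; rewrite cardsC1.
have := cardsID [set f : {set T} | #|f| == 2] (star v).
rewrite /gnbrs /gnonnbrs /hdeg -/(star v).
rewrite (_ : star v :&: _ = [set f in star v | #|f| == 2]);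
  last by apply/setP => f; rewrite !inE andbC.
rewrite (_ : star v :\: _ = [set f in star v | #|f| != 2]);
  last by apply/setP => f; rewrite !inE andbC.
set pairs := #|[set f in star v | _ == 2]|; set nonpairs := #|[set f in star v | _]|.
set nbrs := #|_ :&: _|; set nonnbrs := #|_ :\: _|; set deg := #|star v|.
lia.
Qed.

Lemma full_adj v y : hdeg E v = #|T|.-1 -> y != v -> [set v; y] \in E.
Proof.
move=> vfull yv; apply: contraT => vyE.
have := gnonnbrs_le v; rewrite vfull subnn muln0 leqn0 cards_eq0 => /eqP no_nonnbrs.
have : y \in gnonnbrs v by rewrite !inE yv vyE.
by rewrite no_nonnbrs inE.
Qed.

Lemma full_star_pairs v f :
  hdeg E v = #|T|.-1 -> f \in E -> v \in f -> #|f| = 2.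
Proof.
move=> vfull fE vf; apply/eqP; apply: contraT => fn2.
have := hdeg_add_nonpairs_le v.
rewrite vfull -{2}[#|T|.-1]addn0 leq_add2l leqn0 cards_eq0 => /eqP no_nonpairs.
have : f \in [set f in star v | #|f| != 2] by rewrite !inE fE vf fn2.
by rewrite no_nonpairs inE.
Qed.

Lemma edge_leaves e f :
  e \in E -> f \in E -> f != e -> exists2 o, o \in f & o \notin e.
Proof.
move=> eE fE fe; apply/exists_inP; rewrite -negb_forall_in; apply/negP.
move=> /forall_inP fsub; have /setIidPl fe_f : f \subset e by apply/subsetP.
by have := hlin fE eE fe; rewrite fe_f leqNgt edge_card_gt1.
Qed.

End Stars.

Lemma card2_other (T : finType) (f : {set T}) a :
  #|f| = 2 -> a \in f -> exists2 b, b != a & f = [set a; b].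
Proof.
move=> f2 af; have /cards1P [b fab] : #|f :\ a| == 1.
  by move: (cardsD1 a f); rewrite af f2 add1n => -[<-].
exists b; first by have := set11 b; rewrite -fab !inE => /andP[].
by rewrite -fab setD1K.
Qed.

Lemma outside_first_order (T : finType) (A : {set T}) :
  exists phi : T -> nat,
    [/\ injective phi, forall x, phi x < #|T|,
        forall x, x \notin A -> phi x < #|~: A| &
        forall x, x \in A -> #|~: A| <= phi x].
Proof.
pose s := enum (~: A) ++ enum A.
have s_all x : x \in s by rewrite mem_cat !mem_enum inE orNb.
exists (index^~ s); split.
- by move=> x y eq_idx; rewrite -(nth_index x (s_all x)) eq_idx nth_index.
- by move=> x; rewrite -[#|T|](cardsC A) addnC !cardE -size_cat index_mem.
- by move=> x xA; rewrite index_cat mem_enum inE xA cardE index_mem mem_enum inE.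
- by move=> x xA; rewrite index_cat mem_enum inE xA cardE leq_addr.
Qed.

(* With positions as above, a vertex of A (position a >= m) and a vertex
   outside A (position b < m) never have position sum #|~: A| - 1 modulo n. *)
Lemma modn_avoid (a b m n : nat) : m <= a < n -> b < m -> (a + b) %% n != m.-1.
Proof.
move=> /andP[ma an] bm; apply/eqP.
have [small|big] := ltnP (a + b) n; first by rewrite modn_small //; lia.
have -> : a + b = (a + b - n) + n by lia.
rewrite modnDr modn_small; lia.
Qed.

Section PairColouring.

Variables (T : finType) (E : {set {set T}}) (e : {set T}).
Hypotheses (hne : hyp_edges_nonempty E) (hlin : linear_hyp E)
  (hns : no_singleton_edges E) (eE : e \in E)
  (pairs_off_e : forall f, f \in E -> f != e -> #|f| = 2).

Lemma pair_meeting_e f x :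
  f \in E -> f != e -> x \in f -> x \in e -> exists2 o, o \notin e & f = [set x; o].
Proof.
move=> fE fe xf xe; have [o fo oe] := edge_leaves hne hlin hns eE fE fe.
have [b _ fxb] := card2_other (pairs_off_e fE fe) xf.
exists o => //; move: fo; rewrite fxb !inE => /orP[]/eqP ox; last by rewrite ox.
by move: oe; rewrite ox xe.
Qed.

(* If all edges but e are pairs, colour a pair by the sum of the positions of
   its ends modulo n, and e by #|~: e| - 1: pairs sharing an end differ in
   their other end, and pairs meeting e avoid the colour of e. *)
Lemma pair_colouring : 0 < #|T| -> edge_colorable E #|T|.
Proof.
move=> n_gt0; have [phi [phi_inj phi_lt out_lt in_ge]] := outside_first_order e.
pose weight (f : {set T}) := \sum_(x in f) phi x.
have weight_pair x y : y != x -> weight [set x; y] = phi x + phi y.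
  by move=> yx; rewrite /weight big_setU1 ?big_set1 // inE eq_sym.
pose col f := if f == e then #|~: e|.-1 else weight f.
exists (fun f => Ordinal (ltn_pmod (col f) n_gt0)).
have col_e : col e %% #|T| = #|~: e|.-1.
  by rewrite /col eqxx modn_small //; have := max_card (~: e); lia.
have col_pair_e g x :
    g \in E -> g != e -> x \in g -> x \in e -> col g %% #|T| != col e %% #|T|.
  move=> gE ge xg xe; rewrite col_e /col (negbTE ge).
  have [o oe ->] := pair_meeting_e gE ge xg xe.
  rewrite weight_pair; last by apply: contraNneq oe => ->.
  by apply: modn_avoid; [rewrite in_ge // phi_lt | exact: out_lt].
move=> f g fE gE fg; rewrite -setI_eq0 => /set0Pn [x]; rewrite inE => /andP[xf xg].
rewrite -(inj_eq val_inj) /=.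
have [fe|fe] := eqVneq f e; have [ge|ge] := eqVneq g e.
- by rewrite fe ge eqxx in fg.
- by rewrite fe eq_sym (col_pair_e _ x) // -fe.
- by rewrite ge (col_pair_e _ x) // -ge.
have [b bx fxb] := card2_other (pairs_off_e fE fe) xf.
have [c cx gxc] := card2_other (pairs_off_e gE ge) xg.
rewrite /col (negbTE fe) (negbTE ge) fxb gxc !weight_pair // eqn_modDl.
rewrite !modn_small //; apply: contra fg => /eqP/phi_inj bc.
by rewrite fxb gxc bc.
Qed.

End PairColouring.

Lemma covered_setU1 (T : finType) (f : {set T}) (M : {set {set T}}) x :
  (x \in covered (f |: M)) = (x \in f) || (x \in covered M).
Proof. by rewrite /covered bigcup_setU big_set1 inE. Qed.

Lemma is_matching_add (T : finType) (E M : {set {set T}}) f :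
  is_matching E M -> f \in E -> (forall g, g \in M -> [disjoint f & g]) ->
  is_matching E (f |: M).
Proof.
move=> [ME Mdisj] fE f_disj; split; first by rewrite subUset sub1set fE.
move=> g h; rewrite !in_setU1 => /orP[/eqP-> | gM] /orP[/eqP-> | hM] gh.
- by rewrite eqxx in gh.
- exact: f_disj.
- by rewrite disjoint_sym f_disj.
- exact: Mdisj.
Qed.

Section GreedyPairing.

Variables (T : finType) (E : {set {set T}}) (D1 D2 : pred T).
Hypotheses (D1_adj : forall v y, D1 v -> y != v -> [set v; y] \in E)
  (D2_few : forall v, D2 v -> #|gnonnbrs E v| <= 2).

(* In the
   application D1 and D2 are the vertices of degree n - 1 and n - 2, used only
   through the two properties assumed in this section. *)
Definition good_pairing (F : {set T}) (M : {set {set T}}) : Prop :=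
  [/\ is_matching E M, forall f, f \in M -> #|f| = 2 /\ f \subset F,
      forall x, x \in F -> D1 x -> x \in covered M &
      #|[set x in F | D2 x & x \notin covered M]| <= 3].

(* F is balanced if it contains a non-D1 vertex whenever it contains a D1
   vertex; this is what allows pairing a lonely D1 vertex. *)
Definition balanced (F : {set T}) : bool :=
  [exists v in F, D1 v] ==> [exists w in F, ~~ D1 w].

Lemma good_pairing_add (F : {set T}) (M : {set {set T}}) v p :
  v \in F -> p \in F -> p != v -> [set v; p] \in E ->
  good_pairing (F :\ v :\ p) M -> good_pairing F ([set v; p] |: M).
Proof.
move=> vF pF pv vpE [Mmatch Mpairs Mcov Mleft].
have out_vp x : x \in F -> (x \in F :\ v :\ p) = ~~ (x \in [set v; p]).
  by move=> xF; rewrite !inE xF negb_or andbT andbC.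
have vp_disj g : g \in M -> [disjoint [set v; p] & g].
  move=> /Mpairs[_ /subsetP gF]; rewrite disjoint_sym disjoints_subset.
  by apply/subsetP => x xg; have := gF x xg; rewrite !inE negb_or => /and3P[-> -> _].
split.
- exact: is_matching_add.
- move=> f; rewrite in_setU1 => /orP[/eqP-> | /Mpairs[f2 /subsetP fF]].
    by rewrite cards2 eq_sym pv; split=> //; apply/subsetP => x; rewrite !inE => /orP[]/eqP->.
  by split=> //; apply/subsetP => x /fF; rewrite !inE => /and3P[].
- move=> x xF D1x; rewrite covered_setU1.
  by case: (boolP (x \in [set v; p])) => //= x_out; apply: Mcov; rewrite ?out_vp.
- apply: leq_trans Mleft; apply: subset_leq_card; apply/subsetP => x.
  rewrite !inE covered_setU1 negb_or => /and3P[xF D2x /andP[x_out xnc]].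
  by move: (out_vp x xF); rewrite !inE in x_out * => ->; rewrite x_out D2x xnc.
Qed.

(* An independent set of D2 vertices has at most three elements: all its
   other elements are non-neighbours of any one of them. *)
Lemma D2_independent_le3 (F : {set T}) :
  (forall x y, x \in F -> y \in F -> D2 x -> D2 y -> y != x -> [set x; y] \notin E) ->
  #|[set x in F | D2 x]| <= 3.
Proof.
move=> indep; set R := [set x in F | D2 x].
have [-> | [x xR]] := set_0Vmem R; first by rewrite cards0.
have /andP[xF D2x] : (x \in F) && D2 x by rewrite inE in xR.
have R_nonnbrs : R :\ x \subset gnonnbrs E x.
  apply/subsetP => y; rewrite !inE => /andP[yx /andP[yF D2y]].
  by rewrite yx indep.
by rewrite (cardsD1 x) xR add1n ltnS (leq_trans (subset_leq_card R_nonnbrs)) ?D2_few.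
Qed.

Lemma good_pairing_nil (F : {set T}) :
  (forall x, x \in F -> ~~ D1 x) ->
  (forall x y, x \in F -> y \in F -> D2 x -> D2 y -> y != x -> [set x; y] \notin E) ->
  good_pairing F set0.
Proof.
move=> noD1 indep; split.
- by split=> [|f g]; rewrite ?sub0set ?inE.
- by move=> f; rewrite inE.
- by move=> x /noD1/negbTE->.
apply: leq_trans (D2_independent_le3 indep); apply: subset_leq_card.
by apply/subsetP => x; rewrite !inE => /and3P[-> -> _].
Qed.

(* Greedy construction by induction on #|F|: pair up two D1 vertices, or the
   last D1 vertex with a vertex outside D1, or finally two adjacent D2
   vertices; balance guarantees the second option when it is needed. *)
Lemma good_pairing_exists (F : {set T}) : balanced F -> exists M, good_pairing F M.
Proof.
have [k] := ubnP #|F|; elim: k F => // k IH F F_lt bal.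
have remove_pair v p : v \in F -> p \in F -> p != v -> [set v; p] \in E ->
    balanced (F :\ v :\ p) -> exists M, good_pairing F M.
  move=> vF pF pv vpE bal'; have [|M good] := IH (F :\ v :\ p) _ bal'.
    by move: F_lt; rewrite (cardsD1 v F) (cardsD1 p (F :\ v)) vF !inE pv pF /=; lia.
  by exists ([set v; p] |: M); apply: good_pairing_add.
have balanced_noD1 (G : {set T}) : (forall x, x \in G -> ~~ D1 x) -> balanced G.
  by move=> noD1; apply/implyP => /exists_inP[x /noD1/negbTE->].
have [v /andP[vF D1v] | noD1] := pickP (fun v => (v \in F) && D1 v).
  have [w wF nD1w] : exists2 w, w \in F & ~~ D1 w.
    by apply/exists_inP; move/implyP: bal; apply; apply/exists_inP; exists v.
  have wv : w != v by apply: contraNneq nD1w => ->.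
  have [u /and3P[uF D1u uv] | no_other] := pickP (fun u => [&& u \in F, D1 u & u != v]).
    apply: (remove_pair v u) => //; first exact: D1_adj.
    apply/implyP => _; apply/exists_inP; exists w => //.
    by rewrite !inE wF wv !andbT; apply: contraNneq nD1w => ->.
  apply: (remove_pair v w) => //; first exact: D1_adj.
  apply: balanced_noD1 => x; rewrite !inE => /and3P[_ xv xF].
  by apply/negP => D1x; have := no_other x; rewrite xF D1x xv.
have F_noD1 x : x \in F -> ~~ D1 x.
  by move=> xF; apply/negP => D1x; have := noD1 x; rewrite xF D1x.
have [[x y] /and5P[/= xF yF D2x D2y /andP[yx xyE]] | no_D2_edge] :=
  pickP (fun xy : T * T => [&& xy.1 \in F, xy.2 \in F, D2 xy.1, D2 xy.2,
                             xy.2 != xy.1 & [set xy.1; xy.2] \in E]).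
  apply: (remove_pair x y) => //; apply: balanced_noD1 => z.
  by rewrite !inE => /and3P[_ _ /F_noD1].
exists set0; apply: good_pairing_nil => // x y xF yF D2x D2y yx.
by apply/negP => xyE; have := no_D2_edge (x, y); rewrite /= xF yF D2x D2y yx xyE.
Qed.

End GreedyPairing.

(* Lemma 7 for an arbitrary edge e of H, with n = #|T| (and the bound 5 on
   the uncovered vertices of degree n - 2 improved to 3 in the proof). *)
Lemma matching_or_colouring (T : finType) (E : {set {set T}}) (e : {set T}) :
  0 < #|T| -> hyp_edges_nonempty E -> linear_hyp E -> no_singleton_edges E ->
  e \in E ->
  (exists M' : {set {set T}},
      [/\ is_matching E M', e \in M',
          (forall f, f \in M' -> f != e -> #|f| = 2),
          (forall v, hdeg E v = #|T|.-1 -> v \in covered M') &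
          #|[set v | (hdeg E v == #|T|.-2) && (v \notin covered M')]| <= 5])
  \/ edge_colorable E #|T|.
Proof.
move=> n_gt0 hne hlin hns eE.
pose full v := hdeg E v == #|T|.-1.
have [all_full | /forallPn[w]] := boolP [forall v, (v \notin e) ==> full v].
  right; apply: (pair_colouring hne hlin hns eE _ n_gt0) => f fE fe.
  have [o fo oe] := edge_leaves hne hlin hns eE fE fe.
  apply: (full_star_pairs hne hlin hns _ fE fo); apply/eqP.
  exact: (implyP (forallP all_full o)).
rewrite negb_imply => /andP[we w_nfull]; left.
pose near_full v := hdeg E v == #|T|.-2.
have adj_of_full v y : full v -> y != v -> [set v; y] \in E.
  by move=> /eqP; apply: full_adj.
have near_full_few v : near_full v -> #|gnonnbrs E v| <= 2.
  by move=> /eqP vdeg; have := gnonnbrs_le hne hlin hns v; rewrite vdeg; lia.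
have bal : balanced full (~: e).
  by apply/implyP => _; apply/exists_inP; exists w; rewrite ?inE.
have [M [Mmatch Mpairs Mcov Mleft]] := good_pairing_exists adj_of_full near_full_few bal.
have covered_e x : x \in e -> x \in covered (e |: M) by rewrite covered_setU1 => ->.
exists (e |: M); split.
- apply: is_matching_add => // g /Mpairs[_ gout].
  by rewrite disjoint_sym disjoints_subset.
- by rewrite in_setU1 eqxx.
- by move=> f; rewrite in_setU1 => /orP[/eqP-> | /Mpairs[]]; rewrite ?eqxx.
- move=> v /eqP vfull; have [/covered_e // | ve] := boolP (v \in e).
  by rewrite covered_setU1 Mcov ?orbT ?inE.
apply: leq_trans (leq_trans Mleft _) => //; apply: subset_leq_card; apply/subsetP => x.
rewrite !inE covered_setU1 negb_or => /andP[near_x /andP[xe xnc]].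
by rewrite xe xnc andbT; exact: near_x.
Qed.

Local Open Scope ring_scope.

Theorem lemma7 (R : realType) :
  exists beta0 : R, 0 < beta0 /\
  forall beta : R, 0 < beta -> beta < beta0 ->
  exists n0 : nat, (0 < n0)%N /\
  forall (n : nat) (eps : R) (T : finType) (E : {set {set T}}) (e : {set T}),
    (n0 <= n)%N -> 0 < eps -> eps < 1 ->
    #|T| = n ->
    hyp_edges_nonempty E -> linear_hyp E -> no_singleton_edges E ->
    e \in E ->
    difficult E [set e] eps n ->
    beta * n%:R / 4 <= #|e|%:R ->
    (exists M' : {set {set T}},
        [/\ is_matching E M', e \in M',
            (forall f, f \in M' -> f != e -> #|f| = 2%N),
            (forall v, hdeg E v = n.-1 -> v \in covered M') &
            (#|[set v | (hdeg E v == n.-2) && (v \notin covered M')]| <= 5)%N])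
    \/ edge_colorable E n.
Proof.
exists 1; split=> [|beta _ _]; first exact: ltr01.
exists 1%N; split=> // n eps T E e n_gt0 _ _ Tn hne hlin hns eE _ _.
by rewrite -Tn; apply: matching_or_colouring; rewrite ?Tn.
Qed.
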